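(* Let $K\ge1$, fix $a_2,\dots,a_{K+1}\ge0$, and for $x\ge0$ let $G(x)=P^{(1)}_{K+1}(x,a_2,\dots,a_{K+1})$. Let $\mathcal A_\theta$ be an $L$-layer MinAgg GNN with exactly $K$ message passing layers $\ell_1<\dots<\ell_K$ and with 1-dimensional aggregation. Let $D$ be the set of all $x\ge0$ such that $\mathcal A_\theta$ is not path derived on $G(x)$, and $Y=\{h^{(L)}_{v_{K+1}}(G(x)):x\in D\}$. Then $|Y|\le K$.
   Context: Attributed graphs have nonnegative edge weights and node features, a self-loop of weight $0$ at each node, and $\mathcal N(v)=\{v\}\cup\{u:\{u,v\}\in E\}$. A large constant $\beta>0$ encodes ''infinite distance''. For a source $s$, $\mathrm d^{(t)}(s,v)$ is the minimal weight of a walk from $s$ to $v$ with at most $t$ edges ($\beta$ if none). $P^{(t)}_k(a_1,\dots,a_k)$: path $v_0,\dots,v_k$, edge $\{v_{i-1},v_i\}$ of weight $a_i$, features $x_{v_i}=\mathrm d^{(t)}(v_0,v_i)$. MinAgg GNN: for each $\ell\in[L]$, $m$-layer ReLU MLPs ($x^{(j)}=\sigma(W_jx^{(j-1)}+b_j)$) $f^{\mathrm{agg},(\ell)}:\mathbb R^{d_{\ell-1}+1}\to\mathbb R^d$ and $f^{\mathrm{up},(\ell)}:\mathbb R^{d+d_{\ell-1}}\to\mathbb R^{d_\ell}$ with weight matrices $W^{\mathrm{agg},(\ell)}_j$, $W^{\mathrm{up},(\ell)}_j$; $d_0=d_L=1$, $d_\ell=d$ otherwise; $h^{(0)}_v=x_v$,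 $h^{(\ell)}_v=f^{\mathrm{up},(\ell)}\big(\min_{u\in\mathcal N(v)}f^{\mathrm{agg},(\ell)}(h^{(\ell-1)}_u\oplus x_{(u,v)})\oplus h^{(\ell-1)}_v\big)$ (coordinatewise min, $\oplus$ concatenation). A function on $\mathbb R^n_{\ge0}$ depends on a set $S$ of coordinates if some $x\ne y$ agreeing outside $S$ have different images; layer $\ell$ is message passing if $f^{\mathrm{agg},(\ell)}$ depends on its node component (first $d_{\ell-1}$ input coordinates). $\mathcal A_\theta$ has 1-dimensional aggregation if for every message passing layer $\ell_k$ the first weight matrix $W^{\mathrm{up},(\ell_k)}_1$ of $f^{\mathrm{up},(\ell_k)}$ has exactly one nonzero entry. $\mathcal A_\theta$ is path derived on $P^{(1)}_{K+1}(a_1,\dots,a_{K+1})$ if for every $k\in[K]$, $$h^{(\ell_k)}_{v_{k+1}}=f^{\mathrm{up},(\ell_k)}\Big(f^{\mathrm{agg},(\ell_k)}\big(h^{(\ell_k-1)}_{v_k}\oplus x_{(v_k,v_{k+1})}\big)\oplus h^{(\ell_k-1)}_{v_{k+1}}\Big).$$ *)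

From HB Require Import structures.
From mathcomp Require Import all_boot all_order all_algebra.
From mathcomp Require Import reals.
Unset Printing Implicit Defensive.
Import Order.TTheory GRing.Theory Num.Theory.
Local Open Scope ring_scope.

Inductive mlp (R : Type) : nat -> nat -> Type :=
| MLPnil n : mlp R n n
| MLPcons n k p : 'M[R]_(k, n) -> 'cV[R]_k -> mlp R k p -> mlp R n p.
Arguments MLPnil {R n}.
Arguments MLPcons {R n k p}.

Definition relu {R : numDomainType} {k} (v : 'cV[R]_k) : 'cV[R]_k :=
  map_mx (fun t => Num.max t 0) v.

Fixpoint mlp_apply {R : numDomainType} {n p} (f : mlp R n p) : 'cV[R]_n -> 'cV[R]_p :=
  match f in mlp _ n p return 'cV[R]_n -> 'cV[R]_p with
  | MLPnil _ => fun x => x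
  | MLPcons _ _ _ W b f' => fun x => mlp_apply f' (relu (W *m x + b))
  end.

Fixpoint mlp_depth {R n p} (f : mlp R n p) : nat :=
  match f with
  | MLPnil _ => 0%N
  | MLPcons _ _ _ _ _ f' => (mlp_depth f').+1
  end.

Definition first_weight_one_nonzero {R : numDomainType} {n p} (f : mlp R n p) : Prop :=
  match f with
  | MLPnil _ => False
  | MLPcons n k _ W _ _ => #|[set ij : 'I_k * 'I_n | W ij.1 ij.2 != 0]| = 1%N
  end.

(* f^{agg} : R^{n+1} -> R^p depends on its node component (first n coordinates),
   as a function on nonnegative vectors: some x <> y, agreeing on the last
   (edge) coordinate, have different images. *)
Definition depends_on_node {R : numDomainType} {n p} (f : mlp R (n + 1) p) : Prop :=
  exists x y : 'cV[R]_(n + 1),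
    (forall i, 0 <= x i 0) /\ (forall i, 0 <= y i 0) /\
    x <> y /\ dsubmx x = dsubmx y /\ mlp_apply f x <> mlp_apply f y.

Definition gdim (L d l : nat) : nat := if (l == 0%N) || (l == L) then 1%N else d.

Definition minv {R : realDomainType} {k} (a b : 'cV[R]_k) : 'cV[R]_k :=
  \matrix_(i, j) Num.min (a i j) (b i j).

Section GNN.
Variables (R : realDomainType) (N : nat) (adj : rel 'I_N)
  (ew : 'I_N -> 'I_N -> R) (* edge features x_{(u,v)} (0 on self-loops) *)
  (feat : 'I_N -> R)
  (L d : nat)
  (agg : forall l : nat, mlp R (gdim L d l.-1 + 1) d)
  (upd : forall l : nat, mlp R (d + gdim L d l.-1) (gdim L d l)).

Definition aggmin (msg : 'I_N -> 'cV[R]_d) (v : 'I_N) : 'cV[R]_d :=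
  foldr (@minv R d) (msg v) [seq msg u | u <- enum 'I_N & adj u v].

Fixpoint hgnn (l : nat) : 'I_N -> 'cV[R]_(gdim L d l) :=
  match l return 'I_N -> 'cV[R]_(gdim L d l) with
  | 0%N => fun v => const_mx (feat v)
  | l'.+1 => fun v =>
      mlp_apply (upd l'.+1)
        (col_mx (aggmin (fun u => mlp_apply (agg l'.+1)
                                   (col_mx (hgnn l' u) (const_mx (ew u v)))) v)
                (hgnn l' v))
  end.
End GNN.
Arguments hgnn {R N} adj ew feat L d agg upd l v.
Arguments aggmin {R N} adj d msg v.

Section Dist.
Variables (R : realDomainType) (N : nat) (adj : rel 'I_N)
  (ew : 'I_N -> 'I_N -> R) (beta : R).

Definition walk_rel : rel 'I_N := fun u v => (u == v) || adj u v.

(* weights of all walks from s to v with at most t edges *)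
Definition walk_weights (t : nat) (s v : 'I_N) : seq R :=
  flatten [seq [seq \sum_(e <- pairmap ew s (val p)) e
               | p <- enum {: k.-tuple 'I_N}
               & path walk_rel s (val p) && (last s (val p) == v)]
          | k <- iota 0 t.+1].

Definition dist (t : nat) (s v : 'I_N) : R :=
  match walk_weights t s v with
  | [::] => beta
  | w :: ws => foldr Num.min w ws
  end.
End Dist.
Arguments dist {R N} adj ew beta t s v.

(* nodes v_0,...,v_{K+1} = 'I_(K.+2); edge {v_{i-1},v_i} has weight a i *)
Definition path_adj (K : nat) : rel 'I_(K.+2) :=
  fun u v => ((val u).+1 == val v) || ((val v).+1 == val u).

Definition path_ew {R : realDomainType} (K : nat) (a : nat -> R)
  (u v : 'I_(K.+2)) : R :=
  if u == v then 0 else a (maxn u v).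

Definition Gweights {R : realDomainType} (a : nat -> R) (x : R) : nat -> R :=
  fun i => if i == 1%N then x else a i.

Definition path_feat {R : realDomainType} (K : nat) (a : nat -> R) (beta : R)
  (v : 'I_(K.+2)) : R :=
  dist (path_adj K) (path_ew K a) beta 1 ord0 v.

Definition hG {R : realDomainType} (K : nat) (a : nat -> R) (beta x : R)
  {L d : nat} agg upd (l : nat) (v : 'I_(K.+2)) : 'cV[R]_(gdim L d l) :=
  @hgnn R K.+2 (path_adj K) (path_ew K (Gweights a x))
    (path_feat K (Gweights a x) beta) L d agg upd l v.

(* A_theta is path derived on G(x), for message passing layers ls 1 < ... < ls K *)
Definition path_derived {R : realDomainType} (K : nat) (a : nat -> R) (beta x : R)
  {L d : nat} (agg : forall l : nat, mlp R (gdim L d l.-1 + 1) d)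
  (upd : forall l : nat, mlp R (d + gdim L d l.-1) (gdim L d l))
  (ls : nat -> nat) : Prop :=
  forall k : nat, (1 <= k <= K)%N ->
    hG K a beta x agg upd (ls k) (inord k.+1) =
    mlp_apply (upd (ls k))
      (col_mx (mlp_apply (agg (ls k))
                 (col_mx (hG K a beta x agg upd (ls k).-1 (inord k))
                         (const_mx (path_ew K (Gweights a x) (inord k) (inord k.+1)))))
              (hG K a beta x agg upd (ls k).-1 (inord k.+1))).

From HB Require Import structures.
From mathcomp Require Import all_boot all_order all_algebra.
From mathcomp Require Import reals.
From mathcomp Require Import zify.
From Stdlib Require Import Classical.
Set Implicit Arguments.
Unset Strict Implicit.
Import Order.TTheory GRing.Theory Num.Theory.
Local Open Scope ring_scope.

(* On G(x) only the edge {v_0, v_1} and the feature of v_1 depend on x, and a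
   message passing layer moves information by one edge, so v_j cannot depend on x
   before layer ls (j-1).  Suppose the path derivation fails at step k.  With
   1-dimensional aggregation the update at v_(k+1) in layer ls k reads a single
   coordinate of the min-aggregate (reading h_(v_(k+1)) instead would make the step
   path derived), and failure says that this minimum is not attained by the message
   from v_k; it is therefore a minimum over messages from v_(k+1) and v_(k+2),
   which do not depend on x.  From then on x can no longer reach v_(K+1), so all x
   failing at the same step k give the same output, and there are at most K steps. *)

Lemma relu_ge0 (R : realDomainType) k (v : 'cV[R]_k) i : 0 <= relu v i 0.
Proof. by rewrite /relu mxE le_max lexx orbT. Qed.

Lemma mlp_apply_ge0 (R : realDomainType) n p (f : mlp R n p) (z : 'cV[R]_n) i :
  (0 < mlp_depth f)%N -> 0 <= mlp_apply f z i 0.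
Proof.
case: f z i => [//|n' k p' W b f] z i _ /=.
move: (W *m z + b) => y {W b z}.
by elim: f y i => [k'|k1 k2 p2 W b f IH] y i /=; [exact: relu_ge0 | exact: IH].
Qed.

Lemma first_weight_one_nonzero_coord (R : numDomainType) n p (f : mlp R n p) :
  first_weight_one_nonzero f ->
  exists j0 : 'I_n, forall z z' : 'cV[R]_n,
    z j0 0 = z' j0 0 -> mlp_apply f z = mlp_apply f z'.
Proof.
case: f => [//|{}n k {}p W b f] /= /eqP/cards1P [[i0 j0] W_supp].
exists j0 => z z' zj0; congr (mlp_apply f (relu (_ + b))).
apply/matrixP => i j; rewrite !mxE; apply: eq_bigr => j1 _.
have [->|j1j0] := eqVneq j1 j0; first by rewrite (ord1 j) zj0.
have : (i, j1) \notin [set ij : 'I_k * 'I_n | W ij.1 ij.2 != 0].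
  by rewrite W_supp in_set1 xpair_eqE negb_and j1j0 orbT.
by rewrite inE negbK => /eqP ->; rewrite !mul0r.
Qed.

Lemma col_mx_ge0 (R : numDomainType) m n (A : 'cV[R]_m) (B : 'cV[R]_n) :
  (forall i, 0 <= A i 0) -> (forall i, 0 <= B i 0) -> forall i, 0 <= col_mx A B i 0.
Proof.
by move=> A_ge0 B_ge0 i; rewrite -(splitK i); case: (split i) => j /=;
  rewrite ?col_mxEu ?col_mxEd.
Qed.

Lemma mlp_apply_node_indep (R : numDomainType) n p (f : mlp R (n + 1) p)
    (h h' : 'cV[R]_n) (e : 'cV[R]_1) :
  ~ depends_on_node f -> (forall i, 0 <= h i 0) -> (forall i, 0 <= h' i 0) ->
  0 <= e 0 0 -> mlp_apply f (col_mx h e) = mlp_apply f (col_mx h' e).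
Proof.
move=> indep h_ge0 h'_ge0 e_ge0.
have e_ge0' : forall i, 0 <= e i 0 by move=> i; rewrite (ord1 i).
case: (eqVneq (mlp_apply f (col_mx h e)) (mlp_apply f (col_mx h' e))) => // fne.
exfalso; apply: indep; exists (col_mx h e), (col_mx h' e).
split; first exact: col_mx_ge0.
split; first exact: col_mx_ge0.
split; first by move=> E; move: fne; rewrite E eqxx.
by rewrite !col_mxKd; split => // E; move: fne; rewrite E eqxx.
Qed.

Lemma foldr_min_mem (R : realDomainType) (a : R) s : foldr Num.min a s \in a :: s.
Proof.
elim: s => [|b s IH] /=; first by rewrite mem_seq1.
rewrite minEle; case: ifP => _; first by rewrite !inE eqxx orbT.
by move: IH; rewrite !inE => /orP [->|->]; rewrite ?orbT.
Qed.

Lemma foldr_min_le (R : realDomainType) (a : R) s y :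
  y \in a :: s -> foldr Num.min a s <= y.
Proof.
elim: s => [|b s IH] /=; first by rewrite mem_seq1 => /eqP ->.
rewrite !inE ge_min => /orP [/eqP ya|/orP [/eqP ->|ys]].
- by rewrite IH ?orbT // ya mem_head.
- by rewrite lexx.
- by rewrite IH ?orbT // inE ys orbT.
Qed.

Lemma foldr_min_map_agree (R : realDomainType) (T : eqType) (f g : T -> R) a w s :
  (forall u, u \in a :: s -> u != w -> f u = g u) ->
  foldr Num.min (f a) (map f s) != f w -> foldr Num.min (g a) (map g s) != g w ->
  foldr Num.min (f a) (map f s) = foldr Num.min (g a) (map g s).
Proof.
move=> fg fw gw.
have := foldr_min_mem (f a) (map f s); rewrite -/(map f (a :: s)) => /mapP [u su fu].
have := foldr_min_mem (g a) (map g s); rewrite -/(map g (a :: s)) => /mapP [u' su' gu'].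
have uw : u != w by apply: contraNneq fw => <-; rewrite fu.
have u'w : u' != w by apply: contraNneq gw => <-; rewrite gu'.
apply/eqP; rewrite eq_le; apply/andP; split.
  by rewrite gu' -fg //; apply: foldr_min_le; apply: (map_f f su').
by rewrite fu fg //; apply: foldr_min_le; apply: (map_f g su).
Qed.

Lemma aggmin_entry (R : realDomainType) N (adj : rel 'I_N) d
    (msg : 'I_N -> 'cV[R]_d) v i j :
  aggmin adj d msg v i j =
  foldr Num.min (msg v i j) [seq msg u i j | u <- enum 'I_N & adj u v].
Proof. by rewrite /aggmin; elim: (filter _ _) => //= u s IH; rewrite mxE IH. Qed.

Lemma aggmin_congr (R : realDomainType) N (adj : rel 'I_N) d
    (msg msg' : 'I_N -> 'cV[R]_d) v :
  (forall u, walk_rel N adj u v -> msg u = msg' u) ->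
  aggmin adj d msg v = aggmin adj d msg' v.
Proof.
move=> msgE; rewrite /aggmin msgE ?/walk_rel ?eqxx //; congr foldr.
apply/eq_in_map => u; rewrite mem_filter => /andP [uv _].
by apply: msgE; rewrite /walk_rel uv orbT.
Qed.

Lemma walk_weights_ge0 (R : realDomainType) N (adj : rel 'I_N)
    (ew : 'I_N -> 'I_N -> R) t s v :
  (forall u w, walk_rel N adj u w -> 0 <= ew u w) ->
  forall r, r \in walk_weights R N adj ew t s v -> 0 <= r.
Proof.
move=> ew_ge0 r /flattenP [rs /mapP [k _ ->]] /mapP [p].
rewrite mem_filter => /andP [/andP [walk_p _] _] ->.
rewrite big_seq; apply: sumr_ge0 => e.
elim: (val p) s walk_p => [|y q IH] s //= /andP [sy walk_q].
by rewrite inE => /orP [/eqP ->|]; [exact: ew_ge0 | exact: IH].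
Qed.

Lemma dist_ge0 (R : realDomainType) N (adj : rel 'I_N) (ew : 'I_N -> 'I_N -> R)
    beta t s v :
  0 < beta -> (forall u w, walk_rel N adj u w -> 0 <= ew u w) ->
  0 <= dist adj ew beta t s v.
Proof.
move=> beta_gt0 /walk_weights_ge0 ww_ge0; rewrite /dist.
have := ww_ge0 t s v; case: (walk_weights _ _ _ _ _ _ _) => [_|w ws ge0].
  exact: ltW.
exact/ge0/foldr_min_mem.
Qed.

Lemma path_feat_beta (R : realDomainType) K (w : nat -> R) beta (j : 'I_K.+2) :
  (2 <= j)%N -> path_feat K w beta j = beta.
Proof.
move=> j_ge2; rewrite /path_feat /dist /walk_weights /=.
rewrite (@eq_filter _ _ pred0) ?filter_pred0.
  rewrite (@eq_filter _ _ pred0) ?filter_pred0 //.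
  case=> [[|u [|? ?]] //= _]; rewrite andbT /walk_rel /path_adj.
  apply/negP => /andP [u_nbr /eqP uj]; move: u_nbr j_ge2; rewrite -uj.
  by rewrite -(inj_eq val_inj) /=; case: u {uj} => u /= _; lia.
by case=> [[|? ?] //= _]; apply/negP => /eqP j0; move: j_ge2; rewrite -j0.
Qed.

Lemma walk_rel_path_adj K (u v : 'I_K.+2) :
  walk_rel K.+2 (path_adj K) u v -> [\/ u = v :> nat, u.+1 = v | v.+1 = u].
Proof.
rewrite /walk_rel /path_adj -(inj_eq val_inj).
by move=> /orP [/eqP ->|/orP [/eqP ->|/eqP ->]]; [apply: Or31 | apply: Or32 | apply: Or33].
Qed.

Lemma path_ew_Gweights_ge0 (R : realDomainType) K (a : nat -> R) x (u v : 'I_K.+2) :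
  0 <= x -> (forall i, (2 <= i <= K.+1)%N -> 0 <= a i) ->
  walk_rel K.+2 (path_adj K) u v -> 0 <= path_ew K (Gweights a x) u v.
Proof.
move=> x_ge0 a_ge0 /walk_rel_path_adj uv; rewrite /path_ew /Gweights.
case: eqP => // uv'; case: eqP => // max1; apply: a_ge0.
have uv'' : u <> v :> nat by move=> /val_inj.
by have := ltn_ord u; have := ltn_ord v; case: uv => ?; lia.
Qed.

Lemma path_ew_Gweights_indep (R : realDomainType) K (a : nat -> R) x x'
    (u v : 'I_K.+2) :
  (2 <= v)%N -> path_ew K (Gweights a x) u v = path_ew K (Gweights a x') u v.
Proof.
by move=> v_ge2; rewrite /path_ew /Gweights; case: eqP => // _; case: eqP => //; lia.
Qed.

Lemma classwise_constant_image (T : Type) (U : eqType) (n : nat)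
    (P : nat -> T -> Prop) (f : T -> U) :
  (forall k x y, (k < n)%N -> P k x -> P k y -> f x = f y) ->
  exists Y : seq U, (size Y <= n)%N /\ forall k x, (k < n)%N -> P k x -> f x \in Y.
Proof.
elim: n => [|n IH] fP; first by exists [::].
have [Y [sizeY memY]] := IH (fun k x y kn => fP k x y (ltnW kn)).
have [[x0 Px0]|noP] := classic (exists x, P n x).
  exists (f x0 :: Y); split=> // k x; rewrite ltnS leq_eqVlt => /orP [/eqP -> Px|kn Px].
    by rewrite (fP n x x0) ?mem_head.
  by rewrite inE (memY k) ?orbT.
exists Y; split=> [|k x]; first exact: leqW.
rewrite ltnS leq_eqVlt => /orP [/eqP -> Px|]; [by case: noP; exists x | exact: memY].
Qed.

Section PathGNN.
Variables (R : realDomainType) (K : nat) (a : nat -> R) (beta : R) (L d : nat)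
  (agg : forall l : nat, mlp R (gdim L d l.-1 + 1) d)
  (upd : forall l : nat, mlp R (d + gdim L d l.-1) (gdim L d l))
  (ls : nat -> nat).
Hypotheses (beta_gt0 : 0 < beta) (a_ge0 : forall i, (2 <= i <= K.+1)%N -> 0 <= a i)
  (upd_depth_gt0 : forall l, (1 <= l <= L)%N -> (0 < mlp_depth (upd l))%N)
  (ls_range : forall k, (1 <= k <= K)%N -> (1 <= ls k <= L)%N)
  (ls_incr : forall k, (1 <= k < K)%N -> (ls k < ls k.+1)%N)
  (agg_dep : forall l, (1 <= l <= L)%N -> depends_on_node (agg l) ->
     exists2 k, (1 <= k <= K)%N & l = ls k)
  (upd_one_dim : forall k, (1 <= k <= K)%N -> first_weight_one_nonzero (upd (ls k))).

Local Notation h x := (hG K a beta x agg upd).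
Local Notation ew x := (path_ew K (Gweights a x)).

Definition msg x l (u v : 'I_K.+2) : 'cV[R]_d :=
  mlp_apply (agg l.+1) (col_mx (h x l u) (const_mx (ew x u v))).

Lemma hG_succ x l v :
  h x l.+1 v = mlp_apply (upd l.+1)
    (col_mx (aggmin (path_adj K) d (fun u => msg x l u v) v) (h x l v)).
Proof. by []. Qed.

Definition path_derived_at x l (v : nat) : Prop :=
  h x l (inord v.+1) =
  mlp_apply (upd l)
    (col_mx (mlp_apply (agg l) (col_mx (h x l.-1 (inord v))
                                       (const_mx (ew x (inord v) (inord v.+1)))))
            (h x l.-1 (inord v.+1))).

Lemma hG_ge0 x l v : 0 <= x -> (l <= L)%N -> forall i, 0 <= h x l v i 0.
Proof.
case: l => [|l] x_ge0 lL i.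
  by rewrite /hG /= mxE; apply: dist_ge0 => // u w; apply: path_ew_Gweights_ge0.
by apply: mlp_apply_ge0; apply: upd_depth_gt0; rewrite lL.
Qed.

Lemma msg_eq_of_not_message_passing x x' l (u v : 'I_K.+2) :
  0 <= x -> 0 <= x' -> (l < L)%N -> ~ (exists2 k, (1 <= k <= K)%N & l.+1 = ls k) ->
  (2 <= v)%N -> walk_rel K.+2 (path_adj K) u v -> msg x l u v = msg x' l u v.
Proof.
move=> x_ge0 x'_ge0 lL not_mp v_ge2 uv.
rewrite /msg (path_ew_Gweights_indep a x x' u v_ge2).
apply: mlp_apply_node_indep; rewrite ?mxE.
- by move=> /(agg_dep (l := l.+1) lL).
- by apply: hG_ge0 => //; apply: ltnW.
- by apply: hG_ge0 => //; apply: ltnW.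
- exact: path_ew_Gweights_ge0.
Qed.

Lemma ls_le i j : (1 <= i)%N -> (i <= j)%N -> (j <= K)%N -> (ls i <= ls j)%N.
Proof.
move=> i_ge1; elim: j => [|j IH] ij jK; first lia.
move: ij; rewrite leq_eqVlt => /orP [/eqP -> //|ij].
by have := IH ij (ltnW jK); have := @ls_incr j; lia.
Qed.

(* For [x] failing at step [k], [h x l v_j] does not depend on [x] while
   [l < frontier k j]: up to the failure, [x] reaches [v_j] at layer [ls (j-1)];
   beyond it, [ls j] is the last layer at which [v_(j+1)] needs [v_j] frozen. *)
Definition frontier (k j : nat) : nat :=
  if (j < 2)%N then 0 else
  if (j <= k)%N then ls j.-1 else
  if (j <= K)%N then ls j else L.+1.

Lemma frontier_ge2 k j : (0 < frontier k j)%N -> (2 <= j)%N.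
Proof. by rewrite /frontier; case: (ltnP j 2). Qed.

Lemma frontier_last k : (1 <= k <= K)%N -> frontier k K.+1 = L.+1.
Proof. by move=> kK; rewrite /frontier; repeat case: ifPn; lia. Qed.

Lemma frontier_le_succ k j : (1 <= k <= K)%N -> (j <= K)%N ->
  (frontier k j <= frontier k j.+1)%N.
Proof.
move=> kK jK.
have l1 := @ls_le j.-1 j; have l2 := @ls_le j.-1 j.+1; have l3 := @ls_le j j.+1.
have r1 := @ls_range j.-1; have r2 := @ls_range j.
by rewrite /frontier /=; repeat case: ifPn; lia.
Qed.

Lemma frontier_pred k k' j : (1 <= k <= K)%N -> (1 <= k' <= K)%N -> (j <= K.+1)%N ->
  (ls k' < frontier k j)%N -> ~ (j = k.+1 /\ k' = k) -> (ls k' <= frontier k j.-1)%N.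
Proof.
move=> kK k'K jK.
have l1 := @ls_le j.-1 k'; have l2 := @ls_le k' j.-2.
have l3 := @ls_le j k'; have l4 := @ls_le k' j.-1.
by rewrite /frontier /=; repeat case: ifPn; lia.
Qed.

Lemma frontier_ge_ls k u : (1 <= k <= K)%N -> (k < u <= K.+1)%N ->
  (ls k <= frontier k u)%N.
Proof.
move=> kK ku; have l1 := @ls_le k u; have r1 := @ls_range k.
by rewrite /frontier /=; repeat case: ifPn; lia.
Qed.

Lemma hG_eq_at_failure x x' l k : (1 <= k <= K)%N ->
  first_weight_one_nonzero (upd l.+1) ->
  ~ path_derived_at x l.+1 k -> ~ path_derived_at x' l.+1 k ->
  (forall u : 'I_K.+2, (k < u)%N -> h x l u = h x' l u) ->
  h x l.+1 (inord k.+1) = h x' l.+1 (inord k.+1).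
Proof.
move=> kK upd1 failx failx' right_eq.
set v : 'I_K.+2 := inord k.+1; set w : 'I_K.+2 := inord k.
have vE : nat_of_ord v = k.+1 by rewrite inordK //; lia.
have wE : nat_of_ord w = k by rewrite inordK //; lia.
have [j0 updj0] := first_weight_one_nonzero_coord upd1.
case: (splitP j0) => [i j0E|i j0E]; last first.
  (* an update reading only [h v] makes every step path derived *)
  have {}j0E : j0 = rshift _ i by apply: val_inj.
  by case: failx; rewrite /path_derived_at hG_succ; apply: updj0; rewrite j0E !col_mxEd.
have {}j0E : j0 = lshift _ i by apply: val_inj.
(* failure: coordinate [i] of the aggregate is not attained by the message from [w] *)
have agg_neq y : ~ path_derived_at y l.+1 k ->
    aggmin (path_adj K) d (fun u => msg y l u v) v i 0 != msg y l w v i 0.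
  move=> faily; apply/eqP => aggE; apply: faily.
  by rewrite /path_derived_at hG_succ; apply: updj0; rewrite j0E !col_mxEu.
rewrite !hG_succ; apply: updj0; rewrite j0E !col_mxEu.
move: (agg_neq x failx) (agg_neq x' failx'); rewrite !aggmin_entry.
apply: foldr_min_map_agree => u u_nbr uw.
have uv : walk_rel K.+2 (path_adj K) u v.
  rewrite /walk_rel; move: u_nbr; rewrite inE mem_filter.
  by case/orP => [->|/andP [->]]; rewrite ?orbT.
have uk : nat_of_ord u <> k.
  by move=> uk; move: uw; rewrite -(inj_eq val_inj) /= uk wE eqxx.
rewrite /msg (path_ew_Gweights_indep a x x' u (_ : 2 <= v)%N) ?vE; last lia.
by rewrite right_eq //; case: (walk_rel_path_adj uv); rewrite vE; lia.
Qed.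

Lemma hG_eq_behind_frontier x x' k : 0 <= x -> 0 <= x' -> (1 <= k <= K)%N ->
  ~ path_derived_at x (ls k) k -> ~ path_derived_at x' (ls k) k ->
  forall l, (l <= L)%N -> forall j : 'I_K.+2, (l < frontier k j)%N ->
  h x l j = h x' l j.
Proof.
move=> x_ge0 x'_ge0 kK failx failx'.
elim=> [|l IH] lL j lj; have j_ge2 := frontier_ge2 (leq_ltn_trans (leq0n _) lj).
  by rewrite /hG /= !path_feat_beta.
have [/andP [/eqP lsk /eqP jk]|not_failure] := boolP ((ls k == l.+1) && (j == k.+1 :> nat)).
  have -> : j = inord k.+1 by rewrite -jk inord_val.
  have upd1 := upd_one_dim kK; rewrite lsk in failx failx' upd1.
  apply: hG_eq_at_failure => // u ku; apply: IH; first exact: ltnW.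
  by rewrite -lsk; apply: frontier_ge_ls; rewrite // ku -ltnS ltn_ord.
rewrite !hG_succ IH ?(ltnW lL) ?(ltnW lj) //; congr (mlp_apply _ (col_mx _ _)).
apply: aggmin_congr => u uj.
have [[k' k'K lk']|not_mp] := classic (exists2 k', (1 <= k' <= K)%N & l.+1 = ls k');
  last exact: msg_eq_of_not_message_passing.
rewrite /msg (path_ew_Gweights_indep a x x' u j_ge2) IH ?(ltnW lL) //.
case: (walk_rel_path_adj uj) => uE.
- by rewrite uE; exact: ltnW.
- rewrite (_ : nat_of_ord u = j.-1); last lia.
  rewrite -ltnS lk'; apply: frontier_pred => //.
  + by rewrite -ltnS ltn_ord.
  + by rewrite -lk'.
  + by case=> jk k'k; move: not_failure; rewrite jk lk' k'k !eqxx.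
- rewrite -uE; apply: leq_trans (frontier_le_succ kK _); first exact: ltnW.
  by have := ltn_ord u; lia.
Qed.

Lemma output_eq_of_failure x x' k : 0 <= x -> 0 <= x' -> (1 <= k <= K)%N ->
  ~ path_derived_at x (ls k) k -> ~ path_derived_at x' (ls k) k ->
  h x L (inord K.+1) = h x' L (inord K.+1).
Proof.
move=> x_ge0 x'_ge0 kK failx failx'.
by apply: (hG_eq_behind_frontier x_ge0 x'_ge0 kK failx failx');
  rewrite // inordK // frontier_last.
Qed.

Lemma few_not_path_derived_outputs :
  exists Y : seq 'cV[R]_(gdim L d L), (size Y <= K)%N /\
    forall x, 0 <= x -> ~ path_derived K a beta x agg upd ls -> h x L (inord K.+1) \in Y.
Proof.
pose failing k x := 0 <= x /\ ~ path_derived_at x (ls k.+1) k.+1.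
have out_const k x x' : (k < K)%N -> failing k x -> failing k x' ->
    h x L (inord K.+1) = h x' L (inord K.+1).
  by move=> kK [x_ge0 failx] [x'_ge0 failx']; exact: output_eq_of_failure failx failx'.
have [Y [sizeY memY]] := classwise_constant_image out_const.
exists Y; split=> // x x_ge0 not_derived.
have [k kK failk] : exists2 k, (1 <= k <= K)%N & ~ path_derived_at x (ls k) k.
  apply: NNPP => all_derived; apply: not_derived => k kK.
  by apply: NNPP => failk; apply: all_derived; exists k.
by case: k kK failk => // k kK failk; apply: (memY k).
Qed.
End PathGNN.

Theorem mainTheorem12 (R : realType) (K : nat) (a : nat -> R) (beta : R)
  (L d m : nat)
  (agg : forall l : nat, mlp R (gdim L d l.-1 + 1) d)
  (upd : forall l : nat, mlp R (d + gdim L d l.-1) (gdim L d l))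
  (ls : nat -> nat) :
  (1 <= K)%N ->
  0 < beta ->
  (forall i, (2 <= i <= K.+1)%N -> 0 <= a i) ->
  (forall l, (1 <= l <= L)%N -> mlp_depth (agg l) = m /\ mlp_depth (upd l) = m) ->
  (forall k, (1 <= k <= K)%N -> (1 <= ls k <= L)%N) ->
  (forall k, (1 <= k < K)%N -> (ls k < ls k.+1)%N) ->
  (forall l, (1 <= l <= L)%N ->
     (depends_on_node (agg l) <-> exists2 k, (1 <= k <= K)%N & l = ls k)) ->
  (forall k, (1 <= k <= K)%N -> first_weight_one_nonzero (upd (ls k))) ->
  exists Y : seq 'cV[R]_(gdim L d L),
    (size Y <= K)%N /\
    forall x : R, 0 <= x -> ~ path_derived K a beta x agg upd ls ->
      hG K a beta x agg upd L (inord K.+1) \in Y.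
Proof.
move=> K_ge1 beta_gt0 a_ge0 depth ls_range ls_incr agg_dep upd_one_dim.
have m_gt0 : (0 < m)%N.
  have K1 : (1 <= 1 <= K)%N by rewrite K_ge1.
  have := upd_one_dim 1 K1; rewrite -(depth _ (ls_range 1 K1)).2.
  by case: (upd (ls 1)).
apply: few_not_path_derived_outputs => // [l lL|l lL /(agg_dep l lL)//].
by rewrite (depth l lL).2.
Qed.
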